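(* For every real $\alpha$ with $0<\alpha<1/2$ there exists a positive constant $c_\alpha$ such that for every positive integer $N$ there exists a set $\mathcal{M}$ of positive integers of cardinality $N$ with \[ \sum_{m,n\in\mathcal{M}}\frac{(m,n)^{2\alpha}}{(mn)^{\alpha}}\ge c_\alpha N^{2-2\alpha}(\log N)^{2\alpha}. \]
   Context: $(m,n)$ denotes the greatest common divisor of $m$ and $n$. *)

From Stdlib Require Import Reals Arith List.
Open Scope R_scope.

Definition gcd_term (a : R) (m n : nat) : R :=
  Rpower (INR (Nat.gcd m n)) (2 * a) / Rpower (INR (m * n)) a.

(* \sum_{m,n in M} over ordered pairs (diagonal included); M given as a
   duplicate-free list. *)
Definition gcd_sum (a : R) (M : list nat) : R :=
  fold_right Rplus 0 (map (fun m => fold_right Rplus 0 (map (fun n => gcd_term a m n) M)) M).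

(* Real power x^y for x >= 0 with the convention 0^y = 0 (y > 0 here);
   Stdlib's Rpower would give Rpower 0 y = 1. *)
Definition rpow (x y : R) : R := if Rle_dec x 0 then 0 else Rpower x y.

From Stdlib Require Import Reals Arith List Lia Lra.
Open Scope R_scope.

(* For Z >= 1 consider the integers (Z!)^2 a / b, for the reduced fractions a/b with
   a b <= Z. The images of a/b and a'/b' share the divisor g = (Z!)^2 / (b b') and
   their product is (a b' a' b) g^2, so each summand is at least (a a' b b')^(-alpha),
   hence at least Z^(-2 alpha). Counting lattice points under the hyperbola x y = Z and
   discarding those with a common factor leaves at least Z log Z / 4 - Z reduced
   fractions; taking Z minimal with at least N of them gives Z log N <= 32 N, and the
   N^2 summands then add up to at least 32^(-2 alpha) N^(2 - 2 alpha) (log N)^(2 alpha). *)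

Definition Rsum (l : list R) : R := fold_right Rplus 0 l.

Lemma Rsum_map_le {A} (f g : A -> R) (l : list A) :
  (forall x, In x l -> f x <= g x) -> Rsum (map f l) <= Rsum (map g l).
Proof.
  induction l as [|x l IH]; intros H; simpl; [lra|].
  pose proof (H x (or_introl eq_refl)).
  assert (Rsum (map f l) <= Rsum (map g l)) by (apply IH; auto with datatypes).
  lra.
Qed.

Lemma Rsum_map_ge_const {A} (f : A -> R) (c : R) (l : list A) :
  (forall x, In x l -> c <= f x) -> INR (length l) * c <= Rsum (map f l).
Proof.
  induction l as [|x l IH]; intros H; cbn [length map]; simpl Rsum; [simpl; lra|].
  rewrite S_INR. pose proof (H x (or_introl eq_refl)).
  assert (INR (length l) * c <= Rsum (map f l)) by (apply IH; auto with datatypes).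
  unfold Rsum in *; simpl. lra.
Qed.

Lemma Rsum_map_scal {A} (c : R) (f : A -> R) (l : list A) :
  Rsum (map (fun x => c * f x) l) = c * Rsum (map f l).
Proof. induction l; simpl; [ring|]. unfold Rsum in *; simpl; rewrite IHl; ring. Qed.

Lemma Rsum_map_minus {A} (f g : A -> R) (l : list A) :
  Rsum (map (fun x => f x - g x) l) = Rsum (map f l) - Rsum (map g l).
Proof. induction l; simpl; [unfold Rsum; simpl; ring|]. unfold Rsum in *; simpl; rewrite IHl; ring. Qed.

Lemma Rsum_map_const {A} (c : R) (l : list A) : Rsum (map (fun _ => c) l) = INR (length l) * c.
Proof. induction l; [unfold Rsum; simpl; ring|]. cbn [map length]. rewrite S_INR. unfold Rsum in *; simpl; rewrite IHl; ring. Qed.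

Lemma Rsum_app (l l' : list R) : Rsum (l ++ l') = Rsum l + Rsum l'.
Proof. induction l; unfold Rsum in *; simpl; [ring|]. rewrite IHl; ring. Qed.

Lemma INR_list_sum (l : list nat) : INR (list_sum l) = Rsum (map INR l).
Proof. induction l; [reflexivity|]. simpl. rewrite plus_INR, IHl. reflexivity. Qed.

Lemma INR_div_le (a b : nat) : (0 < b)%nat -> INR (a / b) <= INR a / INR b.
Proof.
  intros Hb. assert (0 < INR b) by (apply lt_0_INR; lia).
  apply Rmult_le_reg_r with (INR b); auto.
  unfold Rdiv. rewrite Rmult_assoc, Rinv_l, Rmult_1_r, <- mult_INR by lra.
  apply le_INR. rewrite Nat.mul_comm. apply Nat.Div0.mul_div_le.
Qed.

Lemma INR_div_ge (a b : nat) : (0 < b)%nat -> INR a / INR b - 1 <= INR (a / b).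
Proof.
  intros Hb. assert (0 < INR b) by (apply lt_0_INR; lia).
  assert (Ea : INR a = INR b * INR (a / b) + INR (a mod b)).
  { rewrite <- mult_INR, <- plus_INR. f_equal. apply Nat.div_mod. lia. }
  assert (INR (a mod b) + 1 <= INR b).
  { rewrite <- S_INR. apply le_INR. pose proof (Nat.mod_upper_bound a b). lia. }
  rewrite Ea. apply Rmult_le_reg_r with (INR b); auto.
  unfold Rdiv. rewrite Rmult_minus_distr_r, Rmult_assoc, Rinv_l by lra. lra.
Qed.

Lemma ln_le (x y : R) : 0 < x -> x <= y -> ln x <= ln y.
Proof. intros Hx [Hxy | <-]; [left; apply ln_increasing |]; lra. Qed.

Lemma Rpower_pos (x y : R) : 0 < Rpower x y.
Proof. apply exp_pos. Qed.

Fixpoint harm (n : nat) : R :=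
  match n with O => 0 | S k => harm k + / INR (S k) end.

Lemma harm_mono (m n : nat) : (m <= n)%nat -> harm m <= harm n.
Proof.
  induction 1 as [|n _ IH]; [lra|]. cbn [harm].
  assert (0 < / INR (S n)) by (apply Rinv_0_lt_compat, lt_0_INR; lia). lra.
Qed.

Lemma harm_le (n : nat) : harm n <= INR n.
Proof.
  induction n as [|n IH]; cbn [harm]; [simpl; lra|].
  assert (/ INR (S n) <= 1).
  { rewrite <- Rinv_1. apply Rinv_le_contravar; [lra|]. apply (le_INR 1); lia. }
  pose proof (S_INR n). lra.
Qed.

Lemma Rsum_inv_seq (n : nat) : Rsum (map (fun b => / INR b) (seq 1 n)) = harm n.
Proof.
  induction n as [|n IH]; [reflexivity|].
  rewrite seq_S, map_app, Rsum_app, IH. cbn [harm]. unfold Rsum; simpl.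
  replace (1 + n)%nat with (S n) by lia. ring.
Qed.

Lemma ln_succ_le_harm (n : nat) : ln (INR n + 1) <= harm n.
Proof.
  induction n as [|n IH]; [simpl; rewrite Rplus_0_l, ln_1; lra|].
  cbn [harm]. rewrite S_INR.
  assert (P : 0 < INR n + 1) by (pose proof (pos_INR n); lra).
  assert (0 < / (INR n + 1)) by (apply Rinv_0_lt_compat; lra).
  (* ln (1 + x) <= x, from 1 + x <= exp x *)
  assert (ln (1 + / (INR n + 1)) <= / (INR n + 1)).
  { rewrite <- (ln_exp (/ (INR n + 1))) at 2. apply ln_le; [lra | apply exp_ineq1_le]. }
  replace (INR n + 1 + 1) with ((INR n + 1) * (1 + / (INR n + 1))) by (field; lra).
  rewrite ln_mult by lra. lra.
Qed.

Lemma Rsum_inv_sq_le (n : nat) : (2 <= n)%nat ->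
  Rsum (map (fun g => / (INR g * INR g)) (seq 2 (n - 1))) <= 3 / 4 - / INR n.
Proof.
  induction n as [|n IH]; intros Hn; [lia|].
  destruct (Nat.eq_dec n 1) as [->|]; [unfold Rsum; simpl; lra|].
  replace (S n - 1)%nat with (S (n - 1)) by lia.
  rewrite seq_S, map_app, Rsum_app. replace (2 + (n - 1))%nat with (S n) by lia.
  specialize (IH ltac:(lia)).
  assert (1 < INR n) by (apply lt_1_INR; lia).
  assert (/ ((INR n + 1) * (INR n + 1)) <= / INR n - / (INR n + 1)).
  { apply Rmult_le_reg_r with (INR n * (INR n + 1) * (INR n + 1)); [nra|].
    field_simplify; lra. }
  unfold Rsum at 2; cbn [map fold_right]. rewrite S_INR. lra.
Qed.

Definition hyperbola (W : nat) : list (nat * nat) :=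
  flat_map (fun b => map (fun a => (a, b)) (seq 1 (W / b))) (seq 1 W).

Lemma in_hyperbola (W a b : nat) :
  In (a, b) (hyperbola W) <-> (1 <= a /\ 1 <= b /\ a * b <= W)%nat.
Proof.
  unfold hyperbola. rewrite in_flat_map. split.
  - intros [b' [Hb' Hin]]. apply in_map_iff in Hin as [a' [E Ha']].
    injection E as <- <-. apply in_seq in Hb', Ha'.
    pose proof (Nat.Div0.mul_div_le W b'). nia.
  - intros (Ha & Hb & Hab). exists b. split; [apply in_seq; nia|].
    apply in_map_iff. exists a. split; [reflexivity|]. apply in_seq.
    assert (a <= W / b)%nat by (apply Nat.div_le_lower_bound; lia). lia.
Qed.

Lemma NoDup_hyperbola (W : nat) : NoDup (hyperbola W).
Proof.
  unfold hyperbola. generalize (seq_NoDup W 1). generalize (seq 1 W).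
  induction l as [|b l IH]; intros Hl; simpl; [constructor|].
  inversion Hl as [|? ? Hb Hl']; subst. apply NoDup_app.
  - apply NoDup_map_NoDup_ForallPairs; [intros x y _ _ E; congruence | apply seq_NoDup].
  - apply IH, Hl'.
  - intros [x y] Hxy Hxy'. apply in_map_iff in Hxy as [? [E _]]. injection E as -> <-.
    apply in_flat_map in Hxy' as [b' [Hb' Hin]].
    apply in_map_iff in Hin as [? [E _]]. injection E as _ ->. contradiction.
Qed.

Lemma INR_length_hyperbola (W : nat) :
  INR (length (hyperbola W)) = Rsum (map (fun b => INR (W / b)) (seq 1 W)).
Proof.
  unfold hyperbola. rewrite length_flat_map, INR_list_sum, map_map.
  f_equal. apply map_ext. intros b. rewrite length_map, length_seq. reflexivity.
Qed.

Lemma length_hyperbola_le (W : nat) : INR (length (hyperbola W)) <= INR W * harm W.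
Proof.
  rewrite INR_length_hyperbola, <- Rsum_inv_seq, <- Rsum_map_scal.
  apply Rsum_map_le. intros b Hb. apply in_seq in Hb.
  apply INR_div_le. lia.
Qed.

Lemma length_hyperbola_ge (W : nat) : INR W * harm W - INR W <= INR (length (hyperbola W)).
Proof.
  rewrite INR_length_hyperbola.
  apply Rle_trans with (Rsum (map (fun b => INR W / INR b - 1) (seq 1 W))).
  - rewrite Rsum_map_minus, Rsum_map_const, length_seq, <- Rsum_inv_seq, <- Rsum_map_scal.
    unfold Rdiv. lra.
  - apply Rsum_map_le. intros b Hb. apply in_seq in Hb. apply INR_div_ge. lia.
Qed.

Definition coprimeb (p : nat * nat) : bool := Nat.gcd (fst p) (snd p) =? 1.

Definition coprime_hyperbola (W : nat) : list (nat * nat) := filter coprimeb (hyperbola W).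

Lemma in_coprime_hyperbola (W a b : nat) :
  In (a, b) (coprime_hyperbola W) <->
  (1 <= a /\ 1 <= b /\ a * b <= W)%nat /\ Nat.gcd a b = 1%nat.
Proof.
  unfold coprime_hyperbola, coprimeb. rewrite filter_In, in_hyperbola; simpl.
  rewrite Nat.eqb_eq. reflexivity.
Qed.

(* A non-coprime pair (g a, g b) with g >= 2 and g^2 a b <= W is recorded as (g, (a, b)). *)
Definition scaled_hyperbolas (W : nat) : list (nat * (nat * nat)) :=
  flat_map (fun g => map (pair g) (hyperbola (W / (g * g))%nat)) (seq 2 (W - 1)).

Definition gcd_split (p : nat * nat) : nat * (nat * nat) :=
  let g := Nat.gcd (fst p) (snd p) in (g, (fst p / g, snd p / g)%nat).

Lemma gcd_split_inj (a b a' b' : nat) :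
  Nat.gcd a b <> 0%nat -> gcd_split (a, b) = gcd_split (a', b') -> (a, b) = (a', b').
Proof.
  intros Hg E. unfold gcd_split in E; simpl in E. injection E as Eg Ea Eb.
  destruct (Nat.gcd_divide a b) as [[ka Ha] [kb Hb]].
  destruct (Nat.gcd_divide a' b') as [[ka' Ha'] [kb' Hb']].
  rewrite <- Eg in Ha', Hb', Ea, Eb.
  revert Hg Ha Hb Ha' Hb' Ea Eb. generalize (Nat.gcd a b). intros g Hg Ha Hb Ha' Hb' Ea Eb.
  subst a b a' b'. rewrite !Nat.div_mul in Ea, Eb by auto. congruence.
Qed.

Lemma gcd_split_in_scaled_hyperbolas (W a b : nat) :
  In (a, b) (hyperbola W) -> Nat.gcd a b <> 1%nat ->
  In (gcd_split (a, b)) (scaled_hyperbolas W).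
Proof.
  rewrite in_hyperbola. intros (Ha & Hb & Hab) Hg1.
  unfold gcd_split, scaled_hyperbolas; simpl.
  assert (Hg0 : Nat.gcd a b <> 0%nat) by (rewrite Nat.gcd_eq_0; lia).
  destruct (Nat.gcd_divide a b) as [[ka Hka] [kb Hkb]].
  revert Hg1 Hg0 Hka Hkb. generalize (Nat.gcd a b). intros g Hg1 Hg0 -> ->.
  rewrite !Nat.div_mul by auto.
  assert (1 <= ka /\ 1 <= kb)%nat as [] by nia.
  apply in_flat_map. exists g. split; [apply in_seq; nia|].
  apply in_map, in_hyperbola. repeat split; try nia.
  apply Nat.div_le_lower_bound; nia.
Qed.

Lemma length_scaled_hyperbolas_le (W : nat) :
  INR (length (scaled_hyperbolas W)) <= 3 / 4 * (INR W * harm W).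
Proof.
  unfold scaled_hyperbolas. rewrite length_flat_map, INR_list_sum, map_map.
  assert (0 <= harm W) by (apply (harm_mono 0)%nat; lia).
  pose proof (pos_INR W).
  apply Rle_trans with
    (Rsum (map (fun g => INR W * harm W * / (INR g * INR g)) (seq 2 (W - 1)))).
  - apply Rsum_map_le. intros g Hg. apply in_seq in Hg. rewrite length_map.
    assert (0 < INR g) by (apply lt_0_INR; lia).
    eapply Rle_trans; [apply length_hyperbola_le|].
    assert (harm (W / (g * g)) <= harm W)
      by (apply harm_mono, Nat.Div0.div_le_upper_bound, Nat.le_mul_l; nia).
    pose proof (INR_div_le W (g * g) ltac:(nia)). rewrite mult_INR in *.
    pose proof (pos_INR (W / (g * g))).
    apply Rle_trans with (INR W / (INR g * INR g) * harm W); [|unfold Rdiv; lra].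
    apply Rmult_le_compat; auto. apply (harm_mono 0); lia.
  - rewrite Rsum_map_scal, (Rmult_comm (3 / 4)). apply Rmult_le_compat_l; [nra|].
    destruct (le_lt_dec 2 W).
    + pose proof (Rsum_inv_sq_le W l).
      assert (0 < / INR W) by (apply Rinv_0_lt_compat, lt_0_INR; lia). lra.
    + replace (W - 1)%nat with 0%nat by lia. unfold Rsum; simpl. lra.
Qed.

Lemma length_coprime_hyperbola_ge (W : nat) :
  INR W * ln (INR W + 1) / 4 - INR W <= INR (length (coprime_hyperbola W)).
Proof.
  set (noncoprime := filter (fun p => negb (coprimeb p)) (hyperbola W)).
  assert (Hsplit : INR (length (coprime_hyperbola W)) + INR (length noncoprime)
                   = INR (length (hyperbola W))).
  { rewrite <- plus_INR. f_equal. apply filter_length. }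
  assert (Hnon : (length noncoprime <= length (scaled_hyperbolas W))%nat).
  { rewrite <- (length_map gcd_split). apply NoDup_incl_length.
    - apply NoDup_map_NoDup_ForallPairs; [|apply NoDup_filter, NoDup_hyperbola].
      intros [a b] q Hp _. apply filter_In in Hp as [Hp _]. apply in_hyperbola in Hp.
      destruct q as [a' b']. apply gcd_split_inj. rewrite Nat.gcd_eq_0. lia.
    - intros x Hx. apply in_map_iff in Hx as [[a b] [<- Hp]].
      apply filter_In in Hp as [Hp Hg]. apply gcd_split_in_scaled_hyperbolas; auto.
      unfold coprimeb in Hg; simpl in Hg. intros E. rewrite E in Hg. discriminate. }
  apply le_INR in Hnon.
  pose proof (length_scaled_hyperbolas_le W). pose proof (length_hyperbola_ge W).
  assert (INR W * ln (INR W + 1) <= INR W * harm W)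
    by (apply Rmult_le_compat_l; [apply pos_INR | apply ln_succ_le_harm]).
  lra.
Qed.

Lemma length_coprime_hyperbola_le (W : nat) :
  INR (length (coprime_hyperbola W)) <= INR W * INR W.
Proof.
  apply Rle_trans with (INR (length (hyperbola W))); [apply le_INR, filter_length_le|].
  eapply Rle_trans; [apply length_hyperbola_le|].
  apply Rmult_le_compat_l; [apply pos_INR | apply harm_le].
Qed.

Lemma length_coprime_hyperbola_ge_id (W : nat) : (W <= length (coprime_hyperbola W))%nat.
Proof.
  rewrite <- (length_seq W 1) at 1. rewrite <- (length_map (fun a => (a, 1%nat))).
  apply NoDup_incl_length.
  - apply NoDup_map_NoDup_ForallPairs; [intros x y _ _ E; congruence | apply seq_NoDup].
  - intros p Hp. apply in_map_iff in Hp as [a [<- Ha]]. apply in_seq in Ha.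
    apply in_coprime_hyperbola. split; [lia|]. apply Nat.bezout_1_gcd. exists 1%nat, (a - 1)%nat. lia.
Qed.

Lemma Rpower_sq_base (x a : R) : 0 < x -> Rpower (x * x) a = Rpower x (2 * a).
Proof.
  intros Hx. rewrite <- Rpower_mult_distr, <- Rpower_plus by auto. f_equal. ring.
Qed.

Lemma gcd_term_ge_common_divisor (a : R) (m n g : nat) :
  0 <= a -> (1 <= m)%nat -> (1 <= n)%nat -> Nat.divide g m -> Nat.divide g n ->
  Rpower (INR g) (2 * a) / Rpower (INR (m * n)) a <= gcd_term a m n.
Proof.
  intros Ha Hm Hn Hgm Hgn. unfold gcd_term, Rdiv.
  apply Rmult_le_compat_r; [left; apply Rinv_0_lt_compat, Rpower_pos|].
  assert (Hgcd : (g <= Nat.gcd m n)%nat).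
  { apply Nat.divide_pos_le; [|apply Nat.gcd_greatest; auto].
    enough (Nat.gcd m n <> 0%nat) by lia. rewrite Nat.gcd_eq_0. lia. }
  destruct (Nat.eq_0_gt_0_cases g) as [->|Hg].
  - apply Nat.divide_0_l in Hgm. lia.
  - apply Rle_Rpower_l; [lra|]. split; [apply lt_0_INR; lia | apply le_INR; auto].
Qed.

Lemma divide_fact (b n : nat) : (1 <= b <= n)%nat -> Nat.divide b (fact n).
Proof.
  induction n as [|n IH]; intros Hb; [lia|].
  change (fact (S n)) with (S n * fact n)%nat.
  destruct (Nat.eq_dec b (S n)) as [->|].
  - apply Nat.divide_factor_l.
  - apply Nat.divide_mul_r, IH. lia.
Qed.

Lemma div_eq_mul_div_mul (F b b' : nat) :
  b <> 0%nat -> b' <> 0%nat -> Nat.divide (b * b') F -> (F / b = b' * (F / (b * b')))%nat.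
Proof.
  intros Hb Hb' [k ->]. rewrite Nat.div_mul by lia.
  replace (k * (b * b'))%nat with (b' * k * b)%nat by ring. apply Nat.div_mul, Hb.
Qed.

Lemma coprime_cross_mul_eq (a b a' b' : nat) :
  Nat.gcd a b = 1%nat -> Nat.gcd a' b' = 1%nat -> (a * b' = a' * b)%nat -> (a, b) = (a', b').
Proof.
  intros Hab Hab' E.
  assert (a = a') as <-.
  { apply Nat.divide_antisym.
    - apply (Nat.gauss a b a'); [exists b'; lia | exact Hab].
    - apply (Nat.gauss a' b' a); [exists b; lia | exact Hab']. }
  destruct (Nat.eq_dec a 0) as [->|Ha].
  - rewrite Nat.gcd_0_l in Hab, Hab'. congruence.
  - f_equal. apply Nat.mul_cancel_l in E; auto.
Qed.

Definition scaled_fraction (Z : nat) (p : nat * nat) : nat :=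
  (fst p * (fact Z * fact Z / snd p))%nat.

Lemma scaled_fraction_common_factor (Z a b a' b' : nat) :
  (1 <= b <= Z)%nat -> (1 <= b' <= Z)%nat ->
  let g := (fact Z * fact Z / (b * b'))%nat in
  (1 <= g)%nat /\ scaled_fraction Z (a, b) = (a * b' * g)%nat /\
  scaled_fraction Z (a', b') = (a' * b * g)%nat.
Proof.
  intros Hb Hb' g.
  assert (Hdiv : Nat.divide (b * b') (fact Z * fact Z))
    by (eapply Nat.divide_trans;
        [apply Nat.mul_divide_mono_r, divide_fact | apply Nat.mul_divide_mono_l, divide_fact];
        lia).
  unfold scaled_fraction; simpl.
  assert (Hdiv' : Nat.divide (b' * b) (fact Z * fact Z)) by (rewrite Nat.mul_comm; exact Hdiv).
  rewrite (div_eq_mul_div_mul _ b b'), (div_eq_mul_div_mul _ b' b), (Nat.mul_comm b' b)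
    by (assumption || lia).
  fold g. repeat split; try ring.
  destruct Hdiv as [k Hk]. unfold g. rewrite Hk, Nat.div_mul by lia.
  pose proof (lt_O_fact Z). destruct k; nia.
Qed.

Lemma scaled_fraction_inj (Z : nat) (p q : nat * nat) :
  In p (coprime_hyperbola Z) -> In q (coprime_hyperbola Z) ->
  scaled_fraction Z p = scaled_fraction Z q -> p = q.
Proof.
  destruct p as [a b], q as [a' b']. rewrite !in_coprime_hyperbola.
  intros [(Ha & Hb & Hab) Hg] [(Ha' & Hb' & Hab') Hg'] E.
  destruct (scaled_fraction_common_factor Z a b a' b') as (Hg1 & Em & En); try nia.
  rewrite Em, En, Nat.mul_cancel_r in E by lia. apply coprime_cross_mul_eq; auto.
Qed.

Lemma scaled_fraction_pos (Z : nat) (p : nat * nat) :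
  In p (coprime_hyperbola Z) -> (1 <= scaled_fraction Z p)%nat.
Proof.
  destruct p as [a b]. rewrite in_coprime_hyperbola. intros [(Ha & Hb & Hab) _].
  destruct (scaled_fraction_common_factor Z a b a b) as (Hg1 & Em & _); [nia | nia |].
  rewrite Em. nia.
Qed.

Lemma gcd_term_scaled_fraction_ge (alpha : R) (Z : nat) (p q : nat * nat) :
  0 <= alpha -> In p (coprime_hyperbola Z) -> In q (coprime_hyperbola Z) ->
  / Rpower (INR Z) (2 * alpha) <= gcd_term alpha (scaled_fraction Z p) (scaled_fraction Z q).
Proof.
  intros Halpha Hp Hq. pose proof (scaled_fraction_pos Z p Hp). pose proof (scaled_fraction_pos Z q Hq).
  destruct p as [a b], q as [a' b']. rewrite in_coprime_hyperbola in Hp, Hq.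
  destruct Hp as [(Ha & Hb & Hab) _], Hq as [(Ha' & Hb' & Hab') _].
  destruct (scaled_fraction_common_factor Z a b a' b') as (Hg & Em & En); try nia.
  rewrite Em, En in *. set (g := (fact Z * fact Z / (b * b'))%nat) in *.
  eapply Rle_trans; [|apply gcd_term_ge_common_divisor; auto; apply Nat.divide_factor_r].
  (* m n = (a b' a' b) g^2, and a b' a' b <= Z^2 *)
  assert (Hg0 : 0 < INR g) by (apply lt_0_INR; lia).
  assert (Hc0 : 0 < INR (a * b' * (a' * b))) by (apply lt_0_INR; nia).
  replace (INR (a * b' * g * (a' * b * g))) with (INR (a * b' * (a' * b)) * (INR g * INR g))
    by (rewrite <- !mult_INR; f_equal; ring).
  rewrite <- Rpower_mult_distr, Rpower_sq_base by nra.
  pose proof (Rpower_pos (INR g) (2 * alpha)).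
  replace (Rpower (INR g) (2 * alpha) / (Rpower (INR (a * b' * (a' * b))) alpha * Rpower (INR g) (2 * alpha)))
    with (/ Rpower (INR (a * b' * (a' * b))) alpha) by (field; split; apply Rgt_not_eq, Rpower_pos).
  rewrite <- Rpower_sq_base by (apply lt_0_INR; nia).
  apply Rinv_le_contravar; [apply Rpower_pos|].
  apply Rle_Rpower_l; auto. split; auto. rewrite <- mult_INR. apply le_INR. nia.
Qed.

Lemma gcd_sum_ge_uniform (alpha c : R) (M : list nat) :
  (forall m n, In m M -> In n M -> c <= gcd_term alpha m n) ->
  INR (length M) * (INR (length M) * c) <= gcd_sum alpha M.
Proof.
  intros H. apply Rsum_map_ge_const. intros m Hm. apply Rsum_map_ge_const. auto.
Qed.

Lemma gcd_sum_nonneg (alpha : R) (M : list nat) : 0 <= gcd_sum alpha M.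
Proof.
  assert (Hterm : forall m n, 0 <= gcd_term alpha m n).
  { intros m n. unfold gcd_term, Rdiv. apply Rmult_le_pos; left;
      [apply Rpower_pos | apply Rinv_0_lt_compat, Rpower_pos]. }
  pose proof (gcd_sum_ge_uniform alpha 0 M (fun m n _ _ => Hterm m n)). lra.
Qed.

Lemma exists_gcd_sum_ge (alpha : R) (Z N : nat) :
  0 <= alpha -> (N <= length (coprime_hyperbola Z))%nat ->
  exists M : list nat,
    NoDup M /\ length M = N /\ (forall m, In m M -> (1 <= m)%nat) /\
    INR N * (INR N * / Rpower (INR Z) (2 * alpha)) <= gcd_sum alpha M.
Proof.
  intros Halpha HN.
  set (P := firstn N (coprime_hyperbola Z)).
  assert (HP : incl P (coprime_hyperbola Z)).
  { intros p Hp. rewrite <- (firstn_skipn N (coprime_hyperbola Z)). apply in_or_app. auto. }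
  assert (Hlen : length P = N) by (apply firstn_length_le, HN).
  exists (map (scaled_fraction Z) P). rewrite length_map, Hlen. repeat split.
  - apply NoDup_map_NoDup_ForallPairs.
    + intros p q Hp Hq. apply scaled_fraction_inj; auto.
    + apply (NoDup_app_remove_r _ (skipn N (coprime_hyperbola Z))).
      unfold P. rewrite firstn_skipn. apply NoDup_filter, NoDup_hyperbola.
  - intros m Hm. apply in_map_iff in Hm as [p [<- Hp]]. apply scaled_fraction_pos; auto.
  - rewrite <- Hlen at 1 2. rewrite <- (length_map (scaled_fraction Z)).
    apply gcd_sum_ge_uniform. intros m n Hm Hn.
    apply in_map_iff in Hm as [p [<- Hp]], Hn as [q [<- Hq]].
    apply gcd_term_scaled_fraction_ge; auto.
Qed.

Lemma exists_least_crossing (f : nat -> nat) (N k : nat) : (N <= f k)%nat ->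
  exists Z, (Z <= k)%nat /\ (N <= f Z)%nat /\ (Z = 0%nat \/ (f (Z - 1) < N)%nat).
Proof.
  induction k as [|k IH]; intros Hk; [exists 0%nat; lia|].
  destruct (le_lt_dec N (f k)) as [Hle|Hlt].
  - destruct (IH Hle) as [Z HZ]. exists Z. lia.
  - exists (S k). rewrite Nat.sub_succ, Nat.sub_0_r. lia.
Qed.

Lemma exists_small_coprime_hyperbola (N : nat) : (2 <= N)%nat ->
  exists Z, (1 <= Z)%nat /\ (N <= length (coprime_hyperbola Z))%nat /\
    INR Z * ln (INR N) <= 32 * INR N.
Proof.
  intros HN.
  destruct (exists_least_crossing (fun Z => length (coprime_hyperbola Z)) N N
              (length_coprime_hyperbola_ge_id N)) as (Z & HZN & HZ & Hmin).
  assert (HZ2 : (2 <= Z)%nat).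
  { destruct Z as [|[|Z]]; [| |lia]; cbv in HZ; lia. }
  destruct Hmin as [|Hmin]; [lia|].
  exists Z. repeat split; [lia | exact HZ|].
  apply lt_INR in Hmin. apply le_INR in HZ, HZN.
  pose proof (length_coprime_hyperbola_ge (Z - 1)) as Hprev.
  pose proof (length_coprime_hyperbola_le Z) as Hsq.
  rewrite minus_INR in Hprev by lia. simpl INR in Hprev.
  replace (INR Z - 1 + 1) with (INR Z) in Hprev by ring.
  assert (2 <= INR Z) by (apply (le_INR 2); lia).
  assert (2 <= INR N) by (apply (le_INR 2); lia).
  assert (Hln : ln (INR N) <= 2 * ln (INR Z)).
  { replace (2 * ln (INR Z)) with (ln (INR Z * INR Z)) by (rewrite ln_mult; lra).
    apply ln_le; lra. }
  assert (0 <= ln (INR Z)) by (rewrite <- ln_1; apply ln_le; lra).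
  assert ((INR Z - 1) * ln (INR Z) < 8 * INR N) by lra.
  nra.
Qed.

Lemma rescale_power_bound (alpha n z : R) :
  0 <= alpha -> 1 < n -> 0 < z -> z * ln n <= 32 * n ->
  / Rpower 32 (2 * alpha) * Rpower n (2 - 2 * alpha) * Rpower (ln n) (2 * alpha)
    <= n * (n * / Rpower z (2 * alpha)).
Proof.
  intros Halpha Hn Hz H.
  assert (Hln : 0 < ln n) by (rewrite <- ln_1; apply ln_increasing; lra).
  assert (Hpow : Rpower z (2 * alpha) * Rpower (ln n) (2 * alpha)
                 <= Rpower 32 (2 * alpha) * Rpower n (2 * alpha)).
  { rewrite !Rpower_mult_distr by lra. apply Rle_Rpower_l; [lra | split; nra]. }
  assert (Hsq : n * n = Rpower n (2 - 2 * alpha) * Rpower n (2 * alpha)).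
  { rewrite <- Rpower_plus. replace (2 - 2 * alpha + 2 * alpha) with (INR 2) by (simpl; ring).
    rewrite Rpower_pow by lra. simpl. ring. }
  pose proof (Rpower_pos z (2 * alpha)). pose proof (Rpower_pos 32 (2 * alpha)).
  pose proof (Rpower_pos n (2 - 2 * alpha)).
  replace (n * (n * / Rpower z (2 * alpha))) with (n * n / Rpower z (2 * alpha)) by (field; lra).
  rewrite Hsq. apply Rmult_le_reg_r with (Rpower z (2 * alpha) * Rpower 32 (2 * alpha)); [nra|].
  field_simplify; try lra. nra.
Qed.

Theorem theorem8 :
  forall alpha : R, 0 < alpha < 1 / 2 ->
  exists c : R, 0 < c /\
    forall N : nat, (1 <= N)%nat ->
      exists M : list nat,
        NoDup M /\ length M = N /\ (forall m, In m M -> (1 <= m)%nat) /\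
        gcd_sum alpha M >=
          c * Rpower (INR N) (2 - 2 * alpha) * rpow (ln (INR N)) (2 * alpha).
Proof.
  intros alpha [Halpha _].
  exists (/ Rpower 32 (2 * alpha)). split; [apply Rinv_0_lt_compat, Rpower_pos|].
  intros N HN. destruct (Nat.eq_dec N 1) as [->|HN1].
  - exists (1%nat :: nil). repeat split; [repeat constructor; auto | intros m [<-|[]]; lia |].
    unfold rpow. simpl INR. rewrite ln_1. destruct (Rle_dec 0 0); [|lra].
    pose proof (gcd_sum_nonneg alpha (1%nat :: nil)). lra.
  - destruct (exists_small_coprime_hyperbola N ltac:(lia)) as (Z & HZ & HN_Z & Hscale).
    destruct (exists_gcd_sum_ge alpha Z N ltac:(lra) HN_Z) as (M & HM & Hlen & Hpos & Hsum).
    exists M. repeat split; auto.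
    assert (Hn : 1 < INR N) by (apply (lt_INR 1); lia).
    assert (0 < ln (INR N)) by (rewrite <- ln_1; apply ln_increasing; lra).
    unfold rpow. destruct (Rle_dec (ln (INR N)) 0); [lra|].
    apply Rle_ge. eapply Rle_trans; [|exact Hsum].
    apply rescale_power_bound; auto; [lra | apply lt_0_INR; lia].
Qed.
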